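(* Let $J$ be either a closed interval in $\mathbb{R}$ or a circle, and let $n\geq 3$. Then the set of injective maps in $\mathrm{CBV}^n_{\mathbb{R}}(J)$ is dense in $\mathrm{CBV}^n_{\mathbb{R}}(J)$ with respect to the norm $\|\cdot\|_{\mathrm{bv}}$.
   Context: $\mathrm{CBV}^n_{\mathbb{R}}(J)$ denotes the Banach space of continuous maps $F:J\to\mathbb{R}^n$ of bounded variation, with norm $\|F\|_{\mathrm{bv}}=\sup_J|F|+\mathrm{var}\,F$, where $\mathrm{var}\,F$ is the total variation of $F$ over $J$. *)

From HB Require Import structures.
From mathcomp Require Import all_boot all_order all_algebra.
From mathcomp Require Import all_classical all_reals all_analysis.
Set Implicit Arguments. Unset Strict Implicit. Unset Printing Implicit Defensive.
Import Order.TTheory GRing.Theory Num.Theory.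
Import numFieldNormedType.Exports.
Local Open Scope classical_set_scope.
Local Open Scope ring_scope.

Section CBV.
Context {R : realType} {n : nat}.

Definition enorm (v : 'rV[R]_n) : R := Num.sqrt (\sum_(i < n) v ord0 i ^+ 2).

(** Variation of F : R -> R^n along a partition a = t_0 < t_1 < ... < t_k = b,
    where s = [:: t_1; ...; t_k] (cf. numfun.variation / itv_partition). *)
Definition vvariation (a b : R) (F : R -> 'rV[R]_n) (s : seq R) : R :=
  let G := F \o nth b (a :: s) in
  \sum_(0 <= k < size s) enorm (G k.+1 - G k).

Definition vvariations (a b : R) (F : R -> 'rV[R]_n) : set R :=
  [set vvariation a b F s | s in itv_partition a b].

Definition bounded_var (a b : R) (F : R -> 'rV[R]_n) : Prop :=
  has_ubound (vvariations a b F).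

(** Total variation var F of F over [a, b] (meaningful when bounded_var). *)
Definition tvar (a b : R) (F : R -> 'rV[R]_n) : R := sup (vvariations a b F).

Definition supnorm (a b : R) (F : R -> 'rV[R]_n) : R :=
  sup [set enorm (F t) | t in [set` `[a, b]]].

Definition bvnorm (a b : R) (F : R -> 'rV[R]_n) : R := supnorm a b F + tvar a b F.

Definition CBV_interval (a b : R) (F : R -> 'rV[R]_n) : Prop :=
  {within [set` `[a, b]], continuous F} /\ bounded_var a b F.

(** Maps on the circle J = R/Z are represented by their 1-periodic lifts
    R -> R^n; the variation over the circle is the variation over [0, 1]
    of the lift, and sup_J |F| is the sup over [0, 1]. *)
Definition CBV_circle (F : R -> 'rV[R]_n) : Prop :=
  [/\ continuous F, (forall t, F (t + 1) = F t) & bounded_var 0 1 F].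

End CBV.

From HB Require Import structures.
From mathcomp Require Import all_boot all_order all_algebra.
From mathcomp Require Import all_classical all_reals all_analysis.
From mathcomp Require Import ring lra.
Import Order.TTheory GRing.Theory Num.Theory.
Import numFieldNormedType.Exports.
Local Open Scope classical_set_scope.
Local Open Scope ring_scope.
Set Implicit Arguments. Unset Strict Implicit. Unset Printing Implicit Defensive.

(* Perturb F into G = F + p1 w1 + p2 w2 with small w1, w2 in R^n, where
   p = (p1, p2) is injective on J: p(t) = (t, 0) on an interval and
   p(t) = (cos 2 pi t, sin 2 pi t) on the circle.  The control function
   U(t) = K (t - a) + sum_i var_[a,t] F_i is continuous, strictly increasing
   and bounds every increment of F, p1, p2, so G - F has bv-norm O(|w1| + |w2|).
   To make G injective, cut J by N points equally spaced for U: for each pair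
   of grid points there is one bad value of w1 (given w2), and pairs (x, y)
   with |p y - p x| >= e stay close to a pair of grid points.  A box of radius
   r splits into M^n sub-boxes, each bad value spoils at most 2^n of them, and
   with N ~ M there are ~ M^2 bad values: since n >= 3 some sub-box is good.
   Iterating with e = 1/k yields nested boxes whose common point (w1, w2)
   makes G injective. *)

Section EuclideanNorm.
Variables (R : realType) (n : nat).
Implicit Type v : 'rV[R]_n.

Lemma sum_sqr_le_sqr_sum (I : Type) (r : seq I) (f : I -> R) :
  (forall i, 0 <= f i) -> \sum_(i <- r) f i ^+ 2 <= (\sum_(i <- r) f i) ^+ 2.
Proof.
move=> f0; elim: r => [|x r IH]; first by rewrite !big_nil expr0n.
rewrite !big_cons.
have S0 : 0 <= \sum_(i <- r) f i by apply: sumr_ge0.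
have := f0 x; nra.
Qed.

Lemma enorm_le_sum v : enorm v <= \sum_i `|v ord0 i|.
Proof.
rewrite /enorm -(@ger0_norm _ (\sum_i `|v ord0 i|)); last exact: sumr_ge0.
rewrite -sqrtr_sqr ler_sqrt; last exact: sqr_ge0.
apply: le_trans (sum_sqr_le_sqr_sum _ (fun i => normr_ge0 (v ord0 i))).
by apply: ler_sum => i _; rewrite real_normK // num_real.
Qed.

Lemma normr_coord_le_enorm v i : `|v ord0 i| <= enorm v.
Proof.
rewrite /enorm -sqrtr_sqr ler_sqrt; last by apply: sumr_ge0 => j _; apply: sqr_ge0.
by rewrite (bigD1 i) //= lerDl; apply: sumr_ge0 => j _; apply: sqr_ge0.
Qed.

Lemma enorm_combination_le (u1 u2 d B : R) (w1 w2 : 'rV[R]_n) :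
  `|u1| <= B -> `|u2| <= B -> (forall i, `|w1 ord0 i| <= d /\ `|w2 ord0 i| <= d) ->
  enorm (u1 *: w1 + u2 *: w2) <= n%:R * (2 * d * B).
Proof.
move=> u1B u2B w_le; apply: le_trans (enorm_le_sum _) _.
apply: (@le_trans _ _ (\sum_(i < n) 2 * d * B)); last first.
  by rewrite sumr_const card_ord (mulr_natl (2 * d * B) n).
apply: ler_sum => i _; rewrite !mxE; apply: le_trans (ler_normD _ _) _.
have [w1i w2i] := w_le i; rewrite !normrM.
have := ler_pM (normr_ge0 _) (normr_ge0 _) u1B w1i.
have := ler_pM (normr_ge0 _) (normr_ge0 _) u2B w2i.
lra.
Qed.

End EuclideanNorm.

Section Domination.
Variables (R : realType) (a b : R).

Definition dominated (U : R -> R) (k : R) (f : R -> R) :=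
  {in `[a, b] &, forall x y, `|f y - f x| <= k * `|U y - U x|}.

Lemma dominated_ordered (U f : R -> R) :
  (forall x y, a <= x -> x <= y -> y <= b -> `|f y - f x| <= U y - U x) ->
  dominated U 1 f.
Proof.
move=> H x y; rewrite !in_itv /= mul1r => /andP[ax xb] /andP[ay yb].
have [xy|yx] := leP x y; first exact: le_trans (H _ _ ax xy yb) (ler_norm _).
rewrite distrC [X in _ <= X]distrC.
exact: le_trans (H _ _ ay (ltW yx) xb) (ler_norm _).
Qed.

Lemma dominated_le U k l f : k <= l -> dominated U k f -> dominated U l f.
Proof.
by move=> kl Hf x y xab yab; apply: le_trans (Hf x y xab yab) (ler_wpM2r _ kl).
Qed.

Lemma dominatedD U k l f g : dominated U k f -> dominated U l g ->
  dominated U (k + l) (fun t => f t + g t).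
Proof.
move=> Hf Hg x y xab yab; rewrite mulrDl.
have -> : f y + g y - (f x + g x) = (f y - f x) + (g y - g x) by ring.
exact: le_trans (ler_normD _ _) (lerD (Hf x y xab yab) (Hg x y xab yab)).
Qed.

Lemma dominatedMr U k f (c : R) : 0 <= k -> dominated U k f ->
  dominated U (k * `|c|) (fun t => f t * c).
Proof.
move=> k0 Hf x y xab yab; rewrite -mulrBl normrM mulrAC.
exact: ler_wpM2r (Hf x y xab yab).
Qed.

End Domination.

Section VariationBounds.
Variables (R : realType) (n : nat) (a b : R).
Variables (U : R -> R) (k : R) (X : R -> 'rV[R]_n).
Hypothesis U_nd : {in `[a, b] &, nondecreasing_fun U}.
Hypothesis X_dom : forall i, dominated a b U k (fun t => X t ord0 i).

Lemma vvariation_le_dominated s : itv_partition a b s ->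
  vvariation a b X s <= n%:R * k * (U b - U a).
Proof.
move=> abs; rewrite /vvariation -(nondecreasing_variation U_nd abs) /variation.
rewrite mulr_sumr !big_nat; apply: ler_sum => j /= js.
set x := nth b (a :: s).
have xj : x j \in `[a, b].
  by rewrite in_itv /= itv_partition_nth_ge ?itv_partition_nth_le // ltnW.
have xj1 : x j.+1 \in `[a, b].
  by rewrite in_itv /= itv_partition_nth_ge ?itv_partition_nth_le.
apply: le_trans (enorm_le_sum _) _.
apply: (@le_trans _ _ (\sum_(i < n) k * `|U (x j.+1) - U (x j)|)).
  by apply: ler_sum => i _; rewrite !mxE; apply: X_dom.
by rewrite sumr_const card_ord -mulrA mulr_natl.
Qed.

Lemma bounded_var_dominated : bounded_var a b X.
Proof.
by exists (n%:R * k * (U b - U a)) => _ [s abs <-]; exact: vvariation_le_dominated.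
Qed.

Lemma bvnorm_le_dominated (B : R) : a < b ->
  {in `[a, b], forall t, enorm (X t) <= B} ->
  bvnorm a b X <= B + n%:R * k * (U b - U a).
Proof.
move=> ab XB; apply: lerD.
  apply: ge_sup; first by exists (enorm (X a)), a; rewrite //= in_itv /= lexx ltW.
  by move=> _ [t tab <-]; apply: XB.
apply: ge_sup.
  by exists (vvariation a b X [:: b]), [:: b]; first exact: itv_partition1.
by move=> _ [s abs <-]; exact: vvariation_le_dominated.
Qed.

End VariationBounds.

Section ControlFunction.
Variables (R : realType) (n : nat) (a b K : R) (F : R -> 'rV[R]_n).
Hypotheses (ab : a < b) (K_gt0 : 0 < K) (F_CBV : CBV_interval a b F).

Definition tv (f : R -> R) (t : R) : R := fine (total_variation a t f).

Lemma tv_increment f x y : bounded_variation a b f ->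
  a <= x -> x <= y -> y <= b -> `|f y - f x| <= tv f y - tv f x.
Proof.
move=> bv ax xy yb.
have ay := le_trans ax xy; have xb := le_trans xy yb.
have fin_y := (bounded_variationP f ay).1 (bounded_variationl ay yb bv).
have fin_x := (bounded_variationP f ax).1 (bounded_variationl ax xb bv).
have fin_xy :=
  (bounded_variationP f xy).1 (bounded_variationr ax xy (bounded_variationl ay yb bv)).
have := total_variation_ge f xy; have := total_variationD f ax xy.
rewrite /tv -(fineK fin_y) -(fineK fin_x) -(fineK fin_xy) -EFinD => -[->].
by rewrite lee_fin /= addrAC subrr add0r.
Qed.

Lemma bounded_variation_coord i : bounded_variation a b (fun t => F t ord0 i).
Proof.
have [M HM] := F_CBV.2; exists M => _ [s abs <-].
apply: le_trans (HM (vvariation a b F s) _); last by exists s.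
apply: ler_sum => k _.
have := normr_coord_le_enorm (F (nth b (a :: s) k.+1) - F (nth b (a :: s) k)) i.
by rewrite !mxE.
Qed.

Definition control (t : R) : R := K * (t - a) + \sum_i tv (fun s => F s ord0 i) t.

Lemma control_increment x y : a <= x -> x <= y -> y <= b ->
  K * (y - x) + \sum_i `|F y ord0 i - F x ord0 i| <= control y - control x.
Proof.
move=> ax xy yb.
have -> : control y - control x =
    K * (y - x) + \sum_i (tv (fun s => F s ord0 i) y - tv (fun s => F s ord0 i) x).
  by rewrite /control sumrB; ring.
rewrite lerD2l; apply: ler_sum => i _.
exact: tv_increment (bounded_variation_coord i) ax xy yb.
Qed.

Lemma control_a : control a = 0.
Proof.
rewrite /control subrr mulr0 add0r big1 // => i _.
by rewrite /tv total_variationxx.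
Qed.

Lemma control_nondecreasing : {in `[a, b] &, nondecreasing_fun control}.
Proof.
move=> x y; rewrite !in_itv /= => /andP[ax _] /andP[_ yb] xy.
rewrite -subr_ge0; apply: le_trans (control_increment ax xy yb).
by rewrite addr_ge0 ?sumr_ge0 // mulr_ge0 ?subr_ge0 // ltW.
Qed.

Lemma control_lt : control a < control b.
Proof.
rewrite -subr_gt0; apply: lt_le_trans (control_increment (lexx a) (ltW ab) (lexx b)).
by rewrite ltr_pwDl ?sumr_ge0 // mulr_gt0 ?subr_gt0.
Qed.

Lemma control_continuous : {within `[a, b], continuous control}.
Proof.
move=> x; apply: cvgD.
  apply: (continuous_subspaceT (f := fun t : R => K * (t - a))) => y.
  by apply: cvgM; [exact: cvg_cst | apply: cvgB; [exact: cvg_id | exact: cvg_cst]].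
apply: cvg_big => [|i _]; first exact: add_continuous.
have Fi_cont : {within `[a, b], continuous (fun t => F t ord0 i)}.
  by move=> t; exact: continuous_comp (F_CBV.1 t) (@coord_continuous R 1 n ord0 i (F t)).
exact: total_variation_continuous ab Fi_cont (bounded_variation_coord i) x.
Qed.

Lemma dominated_control_coord i : dominated a b control 1 (fun t => F t ord0 i).
Proof.
apply: dominated_ordered => x y ax xy yb.
apply: le_trans (control_increment ax xy yb).
rewrite (bigD1 i) //= addrCA lerDl addr_ge0 ?sumr_ge0 //.
by rewrite mulr_ge0 ?subr_ge0 // ltW.
Qed.

Lemma dominated_control_lipschitz (f : R -> R) :
  {in `[a, b] &, forall x y, `|f y - f x| <= K * `|y - x|} ->
  dominated a b control 1 f.
Proof.
move=> f_lip; apply: dominated_ordered => x y ax xy yb.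
have xab : x \in `[a, b] by rewrite in_itv /= ax (le_trans xy yb).
have yab : y \in `[a, b] by rewrite in_itv /= yb (le_trans ax xy).
apply: le_trans (f_lip x y xab yab) _; rewrite ger0_norm ?subr_ge0 //.
by apply: le_trans (control_increment ax xy yb); rewrite lerDl sumr_ge0.
Qed.

End ControlFunction.

Lemma sum_nat_adjacent_le2 (P : nat -> bool) M :
  (forall m m', P m -> P m' -> (m' <= m.+1)%N) -> (\sum_(0 <= m < M) P m <= 2)%N.
Proof.
move=> Padj; elim: M => [|M IH]; first by rewrite big_geq.
rewrite big_nat_recr //=; case PM: (P M); last by rewrite addn0.
rewrite -[2%N]/(1 + 1)%N leq_add2r.
case: M PM {IH} => [|M] PM; first by rewrite big_geq.
rewrite big_nat_recr //= big_nat big1 ?add0n ?leq_b1 // => m /andP[_ mM].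
apply/eqP; rewrite eqb0; apply/negP => Pm.
by have := Padj _ _ Pm PM; rewrite ltnS leqNgt mM.
Qed.

Lemma exists_ffun_avoiding (T : eqType) (Q : seq T) (d M c : nat)
    (hit : 'I_d -> 'I_M -> T -> bool) :
  (forall i q, (\sum_m hit i m q <= c)%N) -> (c ^ d * size Q < M ^ d)%N ->
  exists m : {ffun 'I_d -> 'I_M}, {in Q, forall q, exists i, ~~ hit i (m i) q}.
Proof.
move=> hit_le hQ; apply: contrapT => none.
have all_hit (m : {ffun 'I_d -> 'I_M}) :
    (0 < \sum_(q <- Q) \prod_i hit i (m i) q)%N.
  apply: contrapT => /negP; rewrite -leqNgt leqn0 sum_nat_seq_eq0 => /allP Q0.
  apply: none; exists m => q qQ; apply: contrapT => nohit.
  have := Q0 q qQ; rewrite /= big1 // => i _.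
  by have -> : hit i (m i) q by apply/negPn/negP => h; apply: nohit; exists i.
suff : (M ^ d <= c ^ d * size Q)%N by rewrite leqNgt hQ.
have : (\sum_(m : {ffun 'I_d -> 'I_M}) 1
      <= \sum_(m : {ffun 'I_d -> 'I_M}) \sum_(q <- Q) \prod_i hit i (m i) q)%N.
  by apply: leq_sum => m _.
rewrite sum1_card card_ffun !card_ord exchange_big /= => /leq_trans; apply.
apply: (@leq_trans (\sum_(q <- Q) c ^ d)); last first.
  by rewrite big_const_seq count_predT iter_addn_0 mulnC.
apply: leq_sum => q _; rewrite -(bigA_distr_bigA (fun i m => hit i m q : nat)) /=.
by rewrite -[d in (_ ^ d)%N]card_ord -prod_nat_const; apply: leq_prod.
Qed.

Lemma grid_hits_le2 (R : realType) (base x s : R) M : 0 < s ->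
  (\sum_(m < M) (`|base + (m : nat)%:R * (2 * s) - x| < 2 * s)%R <= 2)%N.
Proof.
move=> s0.
rewrite -(big_mkord xpredT
  (fun m : nat => nat_of_bool (`|base + m%:R * (2 * s) - x| < 2 * s)%R)).
apply: sum_nat_adjacent_le2 => m m'; rewrite !ltr_norml => /andP[h1 h2] /andP[h3 h4].
have : (m'%:R - m%:R) * (2 * s) < 2 * (2 * s) by lra.
by rewrite ltr_pM2r ?mulr_gt0 // ltrBlDr -natrD ltr_nat add2n.
Qed.

Section Boxes.
Variables (R : realType) (n : nat).
Implicit Types (c w : 'rV[R]_n) (r : R).

Definition inbox c r w := forall i, `|w ord0 i - c ord0 i| <= r.
Definition subbox c' r' c r := forall i, `|c' ord0 i - c ord0 i| + r' <= r.

Lemma inbox_normr_le c r w i : inbox c r w -> `|w ord0 i| <= \sum_j `|c ord0 j| + r.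
Proof.
move=> /(_ i) wc; have := lerB_dist (w ord0 i) (c ord0 i).
have : `|c ord0 i| <= \sum_j `|c ord0 j| by rewrite (bigD1 i) //= lerDl sumr_ge0.
lra.
Qed.

Lemma subbox_inbox c' r' c r w : subbox c' r' c r -> inbox c' r' w -> inbox c r w.
Proof.
move=> sub wc' i; have := ler_distD (c' ord0 i) (w ord0 i) (c ord0 i).
have := sub i; have := wc' i; lra.
Qed.

Lemma subbox_trans c'' r'' c' r' c r :
  subbox c'' r'' c' r' -> subbox c' r' c r -> subbox c'' r'' c r.
Proof.
move=> sub1 sub2 i; have := ler_distD (c' ord0 i) (c'' ord0 i) (c ord0 i).
have := sub1 i; have := sub2 i; lra.
Qed.

Lemma subbox_refl c r' r : r' <= r -> subbox c r' c r.
Proof. by move=> r'r i; rewrite subrr normr0 add0r. Qed.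

Lemma nested_boxes_meet (c : nat -> 'rV[R]_n) (r : nat -> R) :
  (forall k, 0 <= r k) -> (forall k, subbox (c k.+1) (r k.+1) (c k) (r k)) ->
  exists w, forall k, inbox (c k) (r k) w.
Proof.
move=> r_ge0 sub.
have nest m k : (m <= k)%N -> subbox (c k) (r k) (c m) (r m).
  move=> /subnK <-; elim: (k - m)%N => [|j IH]; first exact: subbox_refl.
  exact: subbox_trans (sub _) IH.
have low_le_up i m k : c m ord0 i - r m <= c k ord0 i + r k.
  have [mk|km] := leqP m k.
    have := nest m k mk i; rewrite distrC.
    have := ler_norm (c m ord0 i - c k ord0 i); have := r_ge0 k; lra.
  have := nest k m (ltnW km) i; have := ler_norm (c m ord0 i - c k ord0 i).
  have := r_ge0 m; lra.
exists (\row_i sup [set c m ord0 i - r m | m in [set: nat]]) => k i; rewrite mxE.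
set E := [set _ | _ in _].
have E0 : E !=set0 by exists (c 0%N ord0 i - r 0%N), 0%N.
have lo : c k ord0 i - r k <= sup E.
  apply: sup_upper_bound; last by exists k.
  by split => //; exists (c 0%N ord0 i + r 0%N) => _ [m _ <-].
have up : sup E <= c k ord0 i + r k by apply: ge_sup => // _ [m _ <-].
rewrite ler_norml; apply/andP; split; lra.
Qed.

(* The centres of the M^n sub-boxes of radius r / M form a grid of step
   2 r / M, so each q is 2 r / M-close in a given coordinate to at most two
   grid values. *)
Lemma exists_subbox_avoiding c r (M : nat) (Q : seq 'rV[R]_n) :
  0 < r -> (0 < M)%N -> (2 ^ n * size Q < M ^ n)%N ->
  exists c', subbox c' (r / M%:R) c r /\
    {in Q, forall q : 'rV[R]_n, exists i, 2 * (r / M%:R) <= `|c' ord0 i - q ord0 i|}.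
Proof.
move=> r0 M0 hQ; set s := r / M%:R.
have s0 : 0 < s by rewrite divr_gt0 // ltr0n.
have Ms : M%:R * s = r by rewrite /s mulrC divfK // pnatr_eq0 -lt0n.
pose cen i (m : 'I_M) := c ord0 i - r + s + (m : nat)%:R * (2 * s).
pose hit i m (q : 'rV[R]_n) := `|cen i m - q ord0 i| < 2 * s.
have [m Hm] := exists_ffun_avoiding (hit := hit) (fun i q => grid_hits_le2 _ _ _ s0) hQ.
exists (\row_i cen i (m i)); split => [i|q qQ].
  have mM : ((m i : nat)%:R + 1) * s <= r by rewrite -Ms ler_pM2r // natr1 ler_nat.
  have m0 : 0 <= (m i : nat)%:R * s by rewrite mulr_ge0 // ltW.
  rewrite mxE; have -> : cen i (m i) - c ord0 i = - r + s + 2 * ((m i : nat)%:R * s).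
    by rewrite /cen; ring.
  have : `|- r + s + 2 * ((m i : nat)%:R * s)| <= r - s.
    by rewrite ler_norml; apply/andP; split; lra.
  lra.
have [i /negP hi] := Hm q qQ; exists i; rewrite mxE -/s.
by rewrite leNgt; apply/negP.
Qed.

End Boxes.

Definition perturb (R : realType) (n : nat) (F : R -> 'rV[R]_n) (p1 p2 : R -> R)
  (w1 w2 : 'rV[R]_n) (t : R) : 'rV[R]_n := F t + p1 t *: w1 + p2 t *: w2.

Lemma perturbC (R : realType) (n : nat) (F : R -> 'rV[R]_n) p1 p2 w1 w2 :
  perturb F p1 p2 w1 w2 = perturb F p2 p1 w2 w1.
Proof. by apply/funext => t; exact: addrAC. Qed.

Lemma perturb_coord (R : realType) (n : nat) (F : R -> 'rV[R]_n) p1 p2 w1 w2 t i :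
  perturb F p1 p2 w1 w2 t ord0 i = F t ord0 i + p1 t * w1 ord0 i + p2 t * w2 ord0 i.
Proof. by rewrite !mxE. Qed.

Lemma affine_neq0 (R : realType) (D d1 d2 u1 u2 D0 d10 d20 c q : R) :
  D0 + d10 * q + d20 * c = 0 ->
  `|D - D0| + `|(d1 - d10) * u1| + `|(d2 - d20) * u2| + `|d20 * (u2 - c)|
    < `|d10 * (u1 - q)| ->
  D + d1 * u1 + d2 * u2 != 0.
Proof.
move=> root small; apply/eqP => zero.
have : d10 * (u1 - q) =
    - ((D - D0) + (d1 - d10) * u1 + (d2 - d20) * u2 + d20 * (u2 - c)).
  by apply/eqP; rewrite -subr_eq0 -[X in X == 0]addr0 -{2}zero -{1}root; apply/eqP; ring.
move=> eq; move: small; rewrite eq normrN.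
have le3 := ler_normD (D - D0 + (d1 - d10) * u1 + (d2 - d20) * u2) (d20 * (u2 - c)).
have le2 := ler_normD (D - D0 + (d1 - d10) * u1) ((d2 - d20) * u2).
have le1 := ler_normD (D - D0) ((d1 - d10) * u1).
lra.
Qed.

(* The N.+1 ^ 2 grid pairs must be fewer than the M ^ n sub-boxes while N
   grows linearly with M: this is where n >= 3 is needed. *)
Lemma grid_sizes (R : realType) (n : nat) (A : R) : (3 <= n)%N -> 0 <= A ->
  exists N M : nat,
    [/\ (0 < N)%N, (0 < M)%N, A * M%:R <= N%:R & (2 ^ n * N.+1 ^ 2 < M ^ n)%N].
Proof.
move=> n3 A0.
set M := (Num.truncn ((2 ^ n)%:R * (A + 2) ^+ 2 : R)).+1.
set N := (Num.truncn (A * M%:R)).+1.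
have M1 : 1 <= (M%:R : R) by rewrite ler1n.
have hM : (2 ^ n)%:R * (A + 2) ^+ 2 < (M%:R : R) by apply: truncnS_gt.
have hN : A * M%:R < N%:R by apply: truncnS_gt.
have hN1 : (N.+1%:R : R) <= (A + 2) * M%:R.
  have : (N%:R : R) <= A * M%:R + 1 by rewrite -natr1 lerD2r truncn_le mulr_ge0.
  rewrite -natr1; nra.
exists N, M; split => //; first exact: ltW.
rewrite -(ltr_nat R) natrM [(N.+1 ^ 2)%:R]natrX [(M ^ n)%:R]natrX.
apply: (@le_lt_trans _ _ ((2 ^ n)%:R * ((A + 2) ^+ 2 * M%:R ^+ 2))).
  rewrite ler_pM2l ?ltr0n ?expn_gt0 // -exprMn.
  by rewrite lerXn2r ?nnegrE // (le_trans _ hN1).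
apply: (@lt_le_trans _ _ (M%:R ^+ 3)).
  by rewrite mulrA [M%:R ^+ 3]exprS ltr_pM2r // exprn_gt0 // (lt_le_trans ltr01).
exact: ler_weXn2l.
Qed.

Lemma grid_parameters (R : realType) (n : nat) (L e r E : R) : (3 <= n)%N ->
  0 < L -> 0 < e -> 0 < r -> 0 < E ->
  exists N M : nat, [/\ (0 < N)%N, (0 < M)%N, 4 * (L / N%:R) <= e,
    8 * (L / N%:R) * E <= e * (r / M%:R) & (2 ^ n * N.+1 ^ 2 < M ^ n)%N].
Proof.
move=> n3 L0 e0 r0 E0.
set A1 := 4 * L / e; set A2 := 8 * E * L / (e * r).
have A10 : 0 <= A1 by rewrite divr_ge0 ?mulr_ge0 // ltW.
have A20 : 0 <= A2 by rewrite divr_ge0 ?mulr_ge0 ?ltW.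
have [N [M [N0 M0 AMN sizes]]] := grid_sizes n3 (addr_ge0 A10 A20).
have N0' : 0 < (N%:R : R) by rewrite ltr0n.
have M1 : 1 <= (M%:R : R) by rewrite ler1n.
exists N, M; split => //.
  have : A1 <= N%:R by apply: le_trans AMN; nra.
  by rewrite /A1 ler_pdivrMr // mulrA ler_pdivrMr //; lra.
have : A2 * M%:R <= N%:R by apply: le_trans AMN; nra.
rewrite /A2 mulrAC ler_pdivrMr ?mulr_gt0 // => ANM.
have NM0 : 0 < N%:R * M%:R :> R by rewrite mulr_gt0 // ltr0n.
have -> : 8 * (L / N%:R) * E = 8 * E * L * M%:R / (N%:R * M%:R).
  by field; rewrite !pnatr_eq0 -!lt0n M0 N0.
have -> : e * (r / M%:R) = N%:R * (e * r) / (N%:R * M%:R).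
  by field; rewrite !pnatr_eq0 -!lt0n M0 N0.
by rewrite ler_pM2r // invr_gt0.
Qed.

Section SeparationStep.
Variables (R : realType) (n : nat) (a b : R) (F : R -> 'rV[R]_n) (p1 p2 U : R -> R).
Hypotheses (ab : a <= b) (U_lt : U a < U b) (U_cont : {within `[a, b], continuous U}).
Hypothesis U_nd : {in `[a, b] &, nondecreasing_fun U}.
Hypothesis F_dom : forall i, dominated a b U 1 (fun t => F t ord0 i).
Hypotheses (p1_dom : dominated a b U 1 p1) (p2_dom : dominated a b U 1 p2).

Lemma control_range x : x \in `[a, b] -> U a <= U x <= U b.
Proof.
move=> xab; have := xab; rewrite in_itv /= => /andP[ax xb].
by rewrite !U_nd // in_itv /= ?lexx ?ab.
Qed.

Lemma control_grid N : (0 < N)%N -> exists g : nat -> R,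
  (forall k, (k <= N)%N -> g k \in `[a, b]) /\
  {in `[a, b], forall x, exists2 j, (j <= N)%N & `|U x - U (g j)| <= (U b - U a) / N%:R}.
Proof.
move=> N0; set h := (U b - U a) / N%:R.
have N0' : 0 < (N%:R : R) by rewrite ltr0n.
have h0 : 0 < h by rewrite divr_gt0 ?subr_gt0.
have Nh : N%:R * h = U b - U a by rewrite /h mulrC divfK // gt_eqF.
have level k : exists t, (k <= N)%N -> t \in `[a, b] /\ U t = U a + k%:R * h.
  have [kN|Nk] := leqP k N; last by exists a.
  have kh : k%:R * h <= U b - U a by rewrite -Nh ler_wpM2r ?ler_nat // ltW.
  have k0 : 0 <= k%:R * h by rewrite mulr_ge0 // ltW.
  have [t tab Ut] : exists2 t, t \in `[a, b] & U t = U a + k%:R * h.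
    apply: IVT => //; rewrite (min_l (ltW U_lt)) (max_r (ltW U_lt)).
    by apply/andP; split; lra.
  by exists t.
have [g Hg] := choice level.
exists g; split => [k kN|x xab]; first by have [] := Hg k kN.
have /andP[Uax Uxb] := control_range xab.
set y := (U x - U a) / h.
have y0 : 0 <= y by rewrite divr_ge0 ?subr_ge0 // ltW.
have /andP[j_le j_gt] := truncn_itv y0.
have yh : U x - U a = y * h by rewrite /y divfK // gt_eqF.
have jN : (Num.truncn y <= N)%N.
  by rewrite -(ler_nat R) (le_trans j_le) // /y ler_pdivrMr //; lra.
exists (Num.truncn y) => //; have [_ ->] := Hg _ jN.
by rewrite ler_norml; apply/andP; split; nra.
Qed.

Lemma increment_near (f : R -> R) x x' y y' h : dominated a b U 1 f ->
  x \in `[a, b] -> x' \in `[a, b] -> y \in `[a, b] -> y' \in `[a, b] ->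
  `|U x - U x'| <= h -> `|U y - U y'| <= h ->
  `|(f y - f x) - (f y' - f x')| <= 2 * h.
Proof.
move=> f_dom xab x'ab yab y'ab hx hy.
have := f_dom _ _ x'ab xab; have := f_dom _ _ y'ab yab; rewrite !mul1r.
have -> : (f y - f x) - (f y' - f x') = (f y - f y') - (f x - f x') by ring.
by move=> fy fx; apply: le_trans (ler_normB _ _) _; lra.
Qed.

(* The w1 making the i-th coordinates of the perturbation at x and y agree
   when w2 = c2. *)
Definition collision (c2 : 'rV[R]_n) (x y : R) : 'rV[R]_n :=
  \row_i (- (F y ord0 i - F x ord0 i + (p2 y - p2 x) * c2 ord0 i) / (p1 y - p1 x)).

(* Near the grid pair (x', y') the i-th coordinate of the difference is an
   O(h)-perturbation of an affine function of w1 i vanishing at the collision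
   value, which w1 i avoids by 3 s / 2. *)
Lemma perturb_neq_near_grid (e h s B1 B2 r2 : R) (c1 c2 w1 w2 : 'rV[R]_n) x y x' y' i :
  0 < e -> 0 < s -> 4 * h <= e -> 8 * h * (1 + B1 + B2) <= e * s ->
  r2 * (U b - U a) <= e * s / 4 ->
  x \in `[a, b] -> y \in `[a, b] -> x' \in `[a, b] -> y' \in `[a, b] ->
  `|U x - U x'| <= h -> `|U y - U y'| <= h -> e <= `|p1 y - p1 x| ->
  `|w1 ord0 i| <= B1 -> `|w2 ord0 i| <= B2 ->
  `|w1 ord0 i - c1 ord0 i| <= s / 2 -> `|w2 ord0 i - c2 ord0 i| <= r2 ->
  2 * s <= `|c1 ord0 i - collision c2 x' y' ord0 i| ->
  perturb F p1 p2 w1 w2 x != perturb F p1 p2 w1 w2 y.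
Proof.
move=> e0 s0 h4 h8 r2L xab yab x'ab y'ab hx hy ep1 w1B w2B w1c w2c far.
have h0 : 0 <= h := le_trans (normr_ge0 _) hx.
set d10 := p1 y' - p1 x'; set d20 := p2 y' - p2 x'; set q := collision c2 x' y' ord0 i.
have d1_near := increment_near p1_dom xab x'ab yab y'ab hx hy.
have d2_near := increment_near p2_dom xab x'ab yab y'ab hx hy.
have F_near := increment_near (F_dom i) xab x'ab yab y'ab hx hy.
have d10_big : e / 2 <= `|d10| by have := lerB_dist (p1 y - p1 x) d10; lra.
have d10_neq0 : d10 != 0 by rewrite -normr_gt0; lra.
have d20_le : `|d20| <= U b - U a.
  apply: le_trans (p2_dom x'ab y'ab) _; rewrite mul1r ler_norml.
  have := control_range x'ab; have := control_range y'ab.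
  by move=> /andP[? ?] /andP[? ?]; apply/andP; split; lra.
have w1q : 3 * s / 2 <= `|w1 ord0 i - q|.
  by have := ler_distD (w1 ord0 i) (c1 ord0 i) q; rewrite distrC in w1c; lra.
apply/eqP => /(congr1 (fun v : 'rV[R]_n => v ord0 i)) /esym /eqP.
rewrite !perturb_coord -subr_eq0; apply/negP.
have -> : F y ord0 i + p1 y * w1 ord0 i + p2 y * w2 ord0 i
    - (F x ord0 i + p1 x * w1 ord0 i + p2 x * w2 ord0 i)
  = (F y ord0 i - F x ord0 i) + (p1 y - p1 x) * w1 ord0 i + (p2 y - p2 x) * w2 ord0 i.
  by ring.
apply: (affine_neq0 (D0 := F y' ord0 i - F x' ord0 i) (d10 := d10) (d20 := d20)
  (c := c2 ord0 i) (q := q)); first by rewrite /q /collision mxE -/d10 -/d20; field.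
have t1 : `|(p1 y - p1 x - d10) * w1 ord0 i| <= 2 * h * B1 by rewrite normrM ler_pM.
have t2 : `|(p2 y - p2 x - d20) * w2 ord0 i| <= 2 * h * B2 by rewrite normrM ler_pM.
have t3 : `|d20 * (w2 ord0 i - c2 ord0 i)| <= (U b - U a) * r2 by rewrite normrM ler_pM.
have t4 : e / 2 * (3 * s / 2) <= `|d10 * (w1 ord0 i - q)| by rewrite normrM ler_pM //; lra.
have es0 : 0 < e * s by rewrite mulr_gt0.
nra.
Qed.


Lemma subbox_separating_p1 (e r1 r2 : R) (c1 c2 : 'rV[R]_n) : (3 <= n)%N ->
  0 < e -> 0 < r1 -> 0 < r2 ->
  exists c1' (r1' r2' : R), [/\ 0 < r1', 0 < r2', r2' <= r2, subbox c1' r1' c1 r1 &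
    forall w1 w2, inbox c1' r1' w1 -> inbox c2 r2' w2 ->
    {in `[a, b] &, forall x y, e <= `|p1 y - p1 x| ->
      perturb F p1 p2 w1 w2 x != perturb F p1 p2 w1 w2 y}].
Proof.
move=> n3 e0 r10 r20.
set L := U b - U a; have L0 : 0 < L by rewrite subr_gt0.
set B1 := \sum_i `|c1 ord0 i| + r1; set B2 := \sum_i `|c2 ord0 i| + r2.
have B10 : 0 <= B1 by rewrite addr_ge0 ?sumr_ge0 // ltW.
have B20 : 0 <= B2 by rewrite addr_ge0 ?sumr_ge0 // ltW.
have E0 : 0 < 1 + B1 + B2 by lra.
have [N [M [N0 M0 h4 h8 sizes]]] := grid_parameters n3 L0 e0 r10 E0.
set s := r1 / M%:R in h8 *; set h := L / N%:R in h4 h8 *.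
have s0 : 0 < s by rewrite divr_gt0 // ltr0n.
have es0 : 0 < e * s by rewrite mulr_gt0.
set r2' := Num.min r2 (e * s / (4 * L)).
have r2'0 : 0 < r2' by rewrite lt_min r20 /= divr_gt0 //; lra.
have r2'r2 : r2' <= r2 by rewrite ge_min lexx.
have r2'L : r2' * L <= e * s / 4.
  have -> : e * s / 4 = e * s / (4 * L) * L by field; rewrite gt_eqF.
  by apply: ler_wpM2r; [exact: ltW | rewrite /r2' ge_min lexx orbT].
have [g [g_in g_near]] := control_grid N0.
set Qs := [seq collision c2 (g j) (g k) | j <- iota 0 N.+1, k <- iota 0 N.+1].
have hQ : (2 ^ n * size Qs < M ^ n)%N by rewrite size_allpairs size_iota mulnn.
have [c1' [sub far]] := exists_subbox_avoiding c1 r10 M0 hQ.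
have sub' : subbox c1' (s / 2) c1 r1 by move=> i; have := sub i; rewrite -/s; lra.
exists c1', (s / 2), r2'; split => //; first by rewrite divr_gt0.
move=> w1 w2 w1in w2in x y xab yab ep1.
have [j jN hj] := g_near x xab; have [k kN hk] := g_near y yab.
have [i hi] : exists i, 2 * s <= `|c1' ord0 i - collision c2 (g j) (g k) ord0 i|.
  apply: far; apply: (allpairs_f (fun j k => collision c2 (g j) (g k)));
  by rewrite mem_iota add0n ltnS.
apply: (perturb_neq_near_grid (c1 := c1') (i := i) e0 s0 h4 h8 r2'L xab yab
  (g_in j jN) (g_in k kN) hj hk ep1 _ _ (w1in i) (w2in i) hi).
  exact: inbox_normr_le (subbox_inbox sub' w1in).
exact: inbox_normr_le (subbox_inbox (subbox_refl c2 r2'r2) w2in).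
Qed.

End SeparationStep.

Section InjectivePerturbation.
Variables (R : realType) (n : nat) (a b : R) (F : R -> 'rV[R]_n) (p1 p2 U : R -> R).
Hypothesis n3 : (3 <= n)%N.
Hypotheses (ab : a <= b) (U_lt : U a < U b) (U_cont : {within `[a, b], continuous U}).
Hypothesis U_nd : {in `[a, b] &, nondecreasing_fun U}.
Hypothesis F_dom : forall i, dominated a b U 1 (fun t => F t ord0 i).
Hypotheses (p1_dom : dominated a b U 1 p1) (p2_dom : dominated a b U 1 p2).

Definition separating (e : R) (c1 : 'rV[R]_n) (r1 : R) (c2 : 'rV[R]_n) (r2 : R) :=
  forall w1 w2, inbox c1 r1 w1 -> inbox c2 r2 w2 ->
  {in `[a, b] &, forall x y, e <= `|p1 y - p1 x| \/ e <= `|p2 y - p2 x| ->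
    perturb F p1 p2 w1 w2 x != perturb F p1 p2 w1 w2 y}.

Lemma subboxes_separating (e r1 r2 : R) (c1 c2 : 'rV[R]_n) :
  0 < e -> 0 < r1 -> 0 < r2 ->
  exists c1' (r1' : R) c2' (r2' : R), [/\ 0 < r1', 0 < r2', subbox c1' r1' c1 r1,
    subbox c2' r2' c2 r2 & separating e c1' r1' c2' r2'].
Proof.
move=> e0 r10 r20.
have [c1' [r1' [r2a [r1'0 r2a0 r2a_le sub1 sep1]]]] :=
  subbox_separating_p1 ab U_lt U_cont U_nd F_dom p1_dom p2_dom c1 c2 n3 e0 r10 r20.
have [c2' [r2' [r1'' [r2'0 r1''0 r1''_le sub2 sep2]]]] :=
  subbox_separating_p1 ab U_lt U_cont U_nd F_dom p2_dom p1_dom c2 c1' n3 e0 r2a0 r1'0.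
exists c1', r1'', c2', r2'; split => //.
- exact: subbox_trans (subbox_refl _ r1''_le) sub1.
- exact: subbox_trans sub2 (subbox_refl _ r2a_le).
move=> w1 w2 w1in w2in x y xab yab [e1|e2].
  apply: sep1 => //; first exact: subbox_inbox (subbox_refl _ r1''_le) w1in.
  exact: subbox_inbox sub2 w2in.
by rewrite perturbC; apply: sep2.
Qed.

Lemma injective_perturbation (d : R) : 0 < d -> exists w1 w2 : 'rV[R]_n,
  (forall i, `|w1 ord0 i| <= d /\ `|w2 ord0 i| <= d) /\
  {in `[a, b] &, forall x y, perturb F p1 p2 w1 w2 x = perturb F p1 p2 w1 w2 y ->
    p1 x = p1 y /\ p2 x = p2 y}.
Proof.
move=> d0; pose B := (('rV[R]_n * R) * ('rV[R]_n * R))%type.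
have next (kB : nat * B) : exists B' : B, 0 < kB.2.1.2 -> 0 < kB.2.2.2 ->
    [/\ 0 < B'.1.2, 0 < B'.2.2, subbox B'.1.1 B'.1.2 kB.2.1.1 kB.2.1.2,
      subbox B'.2.1 B'.2.2 kB.2.2.1 kB.2.2.2 &
      separating (kB.1.+1%:R)^-1 B'.1.1 B'.1.2 B'.2.1 B'.2.2].
  case: kB => k [[c1 r1] [c2 r2]] /=.
  have [[r10 r20]|r_le0] := pselect (0 < r1 /\ 0 < r2); last first.
    by exists ((c1, r1), (c2, r2)) => r10 r20; case: r_le0.
  have e0 : 0 < (k.+1%:R : R)^-1 by rewrite invr_gt0 ltr0Sn.
  have [c1' [r1' [c2' [r2' sep]]]] := subboxes_separating c1 c2 e0 r10 r20.
  by exists ((c1', r1'), (c2', r2')).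
have [f Hf] := choice next.
pose fix boxes k : B := if k is k'.+1 then f (k', boxes k') else ((0, d), (0, d)).
have pos k : 0 < (boxes k).1.2 /\ 0 < (boxes k).2.2.
  by elim: k => [|k [pos1 pos2]] //=; have [] := Hf (k, boxes k) pos1 pos2.
have step k := Hf (k, boxes k) (pos k).1 (pos k).2.
have [w1 w1in] := nested_boxes_meet (c := fun k => (boxes k).1.1)
  (fun k => ltW (pos k).1) (fun k => let: And5 _ _ sub _ _ := step k in sub).
have [w2 w2in] := nested_boxes_meet (c := fun k => (boxes k).2.1)
  (fun k => ltW (pos k).2) (fun k => let: And5 _ _ _ sub _ := step k in sub).
exists w1, w2; split => [i|x y xab yab same].
  by have := w1in 0%N i; have := w2in 0%N i; rewrite /= !mxE !subr0.
have close e : 0 < e -> ~ (e <= `|p1 y - p1 x| \/ e <= `|p2 y - p2 x|).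
  move=> e0 far; set k := Num.truncn e^-1.
  have ke : (k.+1%:R)^-1 <= e.
    rewrite -[leRHS]invrK lef_pV2 ?posrE ?invr_gt0 ?ltr0Sn //.
    exact/ltW/truncnS_gt.
  have [_ _ _ _ sep] := step k.
  have far' : (k.+1%:R)^-1 <= `|p1 y - p1 x| \/ (k.+1%:R)^-1 <= `|p2 y - p2 x|.
    by case: far => far; [left|right]; apply: le_trans far.
  by move: (sep w1 w2 (w1in k.+1) (w2in k.+1) x y xab yab far'); rewrite same eqxx.
split; apply/eqP/negPn/negP; rewrite eq_sym -subr_eq0 -normr_gt0 => ne0.
  by apply: (close _ ne0); left.
by apply: (close _ ne0); right.
Qed.

End InjectivePerturbation.

Lemma perturb_subE (R : realType) (n : nat) (F : R -> 'rV[R]_n) p1 p2 w1 w2 t :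
  perturb F p1 p2 w1 w2 t - F t = p1 t *: w1 + p2 t *: w2.
Proof. by apply/rowP => i; rewrite !mxE; ring. Qed.

Section SmallInjectivePerturbation.
Variables (R : realType) (n : nat) (a b K B : R) (F : R -> 'rV[R]_n) (p1 p2 : R -> R).
Hypotheses (n3 : (3 <= n)%N) (ab : a < b) (K_gt0 : 0 < K) (F_CBV : CBV_interval a b F).
Hypothesis p1_lip : {in `[a, b] &, forall x y, `|p1 y - p1 x| <= K * `|y - x|}.
Hypothesis p2_lip : {in `[a, b] &, forall x y, `|p2 y - p2 x| <= K * `|y - x|}.
Hypotheses (p1_bd : {in `[a, b], forall t, `|p1 t| <= B})
  (p2_bd : {in `[a, b], forall t, `|p2 t| <= B}).

Lemma small_injective_perturbation (eps : R) : 0 < eps -> exists w1 w2 : 'rV[R]_n,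
  [/\ bounded_var a b (perturb F p1 p2 w1 w2),
    {in `[a, b] &, forall x y, perturb F p1 p2 w1 w2 x = perturb F p1 p2 w1 w2 y ->
      p1 x = p1 y /\ p2 x = p2 y}
    & bvnorm a b (fun t => perturb F p1 p2 w1 w2 t - F t) < eps].
Proof.
move=> eps0; set U := control a K F.
have U_nd := control_nondecreasing K_gt0 F_CBV.
have F_dom := dominated_control_coord K_gt0 F_CBV.
have p1_dom := dominated_control_lipschitz F_CBV p1_lip.
have p2_dom := dominated_control_lipschitz F_CBV p2_lip.
have a_in : a \in `[a, b] by rewrite in_itv /= lexx ltW.
have b_in : b \in `[a, b] by rewrite in_itv /= lexx ltW.
have B0 : 0 <= B := le_trans (normr_ge0 _) (p1_bd a_in).
have Ua : U a = 0 := control_a a K F.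
have Ub0 : 0 <= U b by rewrite -Ua U_nd // ltW.
set C := 2 * n%:R * (B + U b); set d := eps / (C + 1).
have C0 : 0 <= C by rewrite /C; have := ler0n R n; nra.
have C1 : 0 < C + 1 by lra.
have d0 : 0 < d by rewrite divr_gt0.
have [w1 [w2 [w_le w_inj]]] := injective_perturbation n3 (ltW ab)
  (control_lt ab K_gt0 F_CBV) (control_continuous ab F_CBV) U_nd F_dom p1_dom p2_dom d0.
have dev_dom i : dominated a b U (2 * d) (fun t => p1 t * w1 ord0 i + p2 t * w2 ord0 i).
  apply: dominated_le (dominatedD (dominatedMr _ ler01 p1_dom) (dominatedMr _ ler01 p2_dom)).
  by have [? ?] := w_le i; rewrite !mul1r; lra.
exists w1, w2; split => //.
  apply: (bounded_var_dominated (U := U) (k := 1 + 2 * d)) => // i.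
  have -> : (fun t => perturb F p1 p2 w1 w2 t ord0 i) =
      (fun t => F t ord0 i + (p1 t * w1 ord0 i + p2 t * w2 ord0 i)).
    by apply/funext => t; rewrite perturb_coord addrA.
  exact: dominatedD (F_dom i) (dev_dom i).
under eq_fun do rewrite perturb_subE.
apply: (le_lt_trans (bvnorm_le_dominated (U := U) (k := 2 * d)
  (B := n%:R * (2 * d * B)) U_nd _ ab _)) => [i|t tab|].
- by under eq_fun do rewrite !mxE; exact: dev_dom.
- exact: enorm_combination_le (p1_bd tab) (p2_bd tab) w_le.
have dC : d * C < eps by rewrite /d mulrAC ltr_pdivrMr //; nra.
by rewrite Ua subr0; apply: le_lt_trans dC; rewrite /C; nra.
Qed.

End SmallInjectivePerturbation.

Section UnitCircle.
Variable R : realType.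

Lemma dist_le_of_is_derive (f df : R -> R) : continuous f ->
  (forall x, is_derive x (1 : R) f (df x)) -> (forall x, `|df x| <= 1) ->
  forall x y, `|f y - f x| <= `|y - x|.
Proof.
move=> f_cont f_der df_le.
suff lt x y : x < y -> `|f y - f x| <= `|y - x|.
  move=> x y; have [xy|yx|->] := ltgtP x y; first exact: lt.
    by rewrite distrC [X in _ <= X]distrC; exact: lt.
  by rewrite !subrr normr0.
move=> xy; have [c _ ->] := MVT xy (fun z _ => f_der z) (continuous_subspaceT f_cont).
by rewrite normrM ler_piMl.
Qed.

Lemma sin_dist_le x y : `|sin y - sin x| <= `|y - x| :> R.
Proof. exact: (dist_le_of_is_derive (@continuous_sin R) _ (@cos_max R)). Qed.

Lemma cos_dist_le x y : `|cos y - cos x| <= `|y - x| :> R.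
Proof.
apply: (dist_le_of_is_derive (@continuous_cos R) (df := fun z => - sin z)) => // z.
by rewrite normrN sin_max.
Qed.

Lemma cos_eq1_itv u : 0 <= u < pi *+ 2 -> cos u = 1 -> u = 0 :> R.
Proof.
move=> /andP[u0 u2pi] cu; have pi0 := @pi_gt0 R.
have in0pi v : 0 <= v <= pi -> v \in `[0, pi] by rewrite in_itv.
have [upi|piu] := leP u pi.
  by apply: cos_inj; rewrite ?cos0 ?in0pi ?lexx ?u0 // ltW.
have v_in : pi *+ 2 - u \in `[0, pi] by apply: in0pi; rewrite mulr2n; lra.
have : pi *+ 2 - u = 0.
  apply: cos_inj => //; first by rewrite in0pi ?lexx ?ltW.
  by rewrite cos0 addrC (cosD2pi (- u)) cosN.
by rewrite mulr2n; lra.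
Qed.

Lemma cos_sin_2pi_inj x y : 0 <= x < 1 -> 0 <= y < 1 ->
  cos (pi *+ 2 * x) = cos (pi *+ 2 * y) -> sin (pi *+ 2 * x) = sin (pi *+ 2 * y) -> x = y :> R.
Proof.
wlog xy : x y / x <= y.
  move=> H hx hy hc hs; have [xy|/ltW yx] := leP x y; first exact: H.
  by apply/esym/(H y x yx hy hx); [rewrite hc | rewrite hs].
move=> /andP[x0 x1] /andP[y0 y1] hc hs; have pi0 := @pi_gt0 R.
suff : pi *+ 2 * y - pi *+ 2 * x = 0.
  rewrite -mulrBr => /eqP; rewrite mulf_eq0 subr_eq0 => /orP[|/eqP -> //].
  by rewrite mulr2n => /eqP; lra.
apply: cos_eq1_itv; last by rewrite cosB hc hs -!expr2 cos2Dsin2.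
rewrite -mulrBr; apply/andP; split; first by rewrite mulr_ge0 ?subr_ge0 // mulr2n; lra.
by rewrite -[ltRHS]mulr1 ltr_pM2l ?mulr2n; lra.
Qed.

End UnitCircle.

Lemma cvg_perturb (R : realType) (n : nat) (G : set_system R) {G_filter : Filter G}
    (F : R -> 'rV[R]_n) (p1 p2 : R -> R) w1 w2 x :
  F @ G --> F x -> p1 @ G --> p1 x -> p2 @ G --> p2 x ->
  perturb F p1 p2 w1 w2 @ G --> perturb F p1 p2 w1 w2 x.
Proof.
move=> Fx p1x p2x; apply: cvgD; first apply: cvgD.
- exact: Fx.
- exact: cvgZr_tmp.
- exact: cvgZr_tmp.
Qed.

Section Density.
Variables (R : realType) (n : nat).
Hypothesis n3 : (3 <= n)%N.

Lemma CBV_interval_injective_dense (a b : R) : a < b ->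
  forall F : R -> 'rV[R]_n, CBV_interval a b F ->
  forall eps : R, 0 < eps -> exists G : R -> 'rV[R]_n,
    [/\ CBV_interval a b G, {in `[a, b] &, injective G}
      & bvnorm a b (fun t => G t - F t) < eps].
Proof.
move=> ab F F_CBV eps eps0.
have id_lip : {in `[a, b] &, forall x y, `|y - x| <= 1 * `|y - x|}.
  by move=> x y _ _; rewrite mul1r.
have zero_lip : {in `[a, b] &, forall x y, `|(0 : R) - 0| <= 1 * `|y - x|}.
  by move=> x y _ _; rewrite subrr normr0 mul1r.
have id_bd : {in `[a, b], forall t, `|t| <= `|a| + `|b|}.
  move=> t; rewrite in_itv /= => /andP[ta tb]; rewrite ler_norml.
  have := ler_norm (- a); have := ler_norm b; rewrite normrN.
  by have := normr_ge0 a; have := normr_ge0 b; move=> *; apply/andP; split; lra.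
have zero_bd : {in `[a, b], forall t, `|0 : R| <= `|a| + `|b|}.
  by move=> t _; rewrite normr0 addr_ge0.
have [w1 [w2 [G_bv G_inj G_close]]] := small_injective_perturbation (p1 := id)
  (p2 := fun=> 0) n3 ab ltr01 F_CBV id_lip zero_lip id_bd zero_bd eps0.
exists (perturb F id (fun=> 0) w1 w2); split => //.
  split => // x; apply: cvg_perturb; first exact: nbhs_subspace_filter.
  - exact: (F_CBV.1 x).
  - exact: (@continuous_subspaceT _ _ _ id (fun t => cvg_id) x).
  - by apply: cvg_cst; exact: nbhs_subspace_filter.
by move=> x y xab yab /(G_inj x y xab yab) [].
Qed.

Lemma CBV_circle_injective_dense (F : R -> 'rV[R]_n) : CBV_circle F ->
  forall eps : R, 0 < eps -> exists G : R -> 'rV[R]_n,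
    [/\ CBV_circle G, {in `[0, 1[ &, injective G}
      & bvnorm 0 1 (fun t => G t - F t) < eps].
Proof.
move=> [F_cont F_per F_bv] eps eps0.
set c : R := pi *+ 2; have c0 : 0 < c by rewrite /c mulr2n; have := @pi_gt0 R; lra.
have scaled_lip (f : R -> R) : (forall u v, `|f v - f u| <= `|v - u|) ->
    {in `[0, 1] &, forall x y, `|f (c * y) - f (c * x)| <= c * `|y - x|}.
  move=> f_lip x y _ _; apply: le_trans (f_lip _ _) _.
  by rewrite -mulrBr normrM gtr0_norm.
have F_CBV : CBV_interval 0 1 F by split; [exact: continuous_subspaceT|].
have [w1 [w2 [G_bv G_inj G_close]]] := small_injective_perturbation
  (p1 := fun t => cos (c * t)) (p2 := fun t => sin (c * t)) n3 ltr01 c0 F_CBV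
  (scaled_lip _ (@cos_dist_le R)) (scaled_lip _ (@sin_dist_le R))
  (fun t _ => cos_max _) (fun t _ => sin_max _) eps0.
exists (perturb F (fun t => cos (c * t)) (fun t => sin (c * t)) w1 w2); split => //.
  split => // [x|t].
    have cx : {for x, continuous (fun t : R => c * t)} by apply: cvgMr; exact: cvg_id.
    apply: cvg_perturb; first exact: F_cont.
      exact: continuous_comp cx (@continuous_cos R (c * x)).
    exact: continuous_comp cx (@continuous_sin R (c * x)).
  by rewrite /perturb F_per mulrDr mulr1 (cosD2pi (c * t)) (sinD2pi (c * t)).
move=> x y; rewrite !in_itv /= => /andP[x0 x1] /andP[y0 y1] Gxy.
have xin : x \in `[0, 1] by rewrite in_itv /= x0 ltW.
have yin : y \in `[0, 1] by rewrite in_itv /= y0 ltW.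
have [hc hs] := G_inj x y xin yin Gxy.
by apply: cos_sin_2pi_inj; rewrite ?x0 ?y0.
Qed.

End Density.

Theorem theorem3p5 (R : realType) (n : nat) (hn : (3 <= n)%N) :
  (* J = [a, b] a closed interval *)
  (forall (a b : R), a < b ->
   forall F : R -> 'rV[R]_n, CBV_interval a b F ->
   forall eps : R, 0 < eps ->
   exists G : R -> 'rV[R]_n,
     [/\ CBV_interval a b G, {in `[a, b] &, injective G}
       & bvnorm a b (fun t => G t - F t) < eps])
  /\
  (* J = R/Z a circle *)
  (forall F : R -> 'rV[R]_n, CBV_circle F ->
   forall eps : R, 0 < eps ->
   exists G : R -> 'rV[R]_n,
     [/\ CBV_circle G, {in `[0, 1[ &, injective G}
       & bvnorm 0 1 (fun t => G t - F t) < eps]).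
Proof.
split; [exact: CBV_interval_injective_dense | exact: CBV_circle_injective_dense].
Qed.
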